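(* Let $X$ be a complex torus of dimension $g$, with $\omega \in \mathrm{H}^2(X, \mathbf{Z}/n)$. Suppose that $e_1, \dots, e_{2g}$ is a basis for $\mathrm{H}^1(X, \mathbf{Z})$ such that \[ \omega = \sum_{i = 1}^r a_i e_{i} \wedge e_{i + g}, \] for $0 \neq a_i \in \mathbf{Z}/n$ and $0 \leq r \leq g$. Then \[ \mathrm{Ann}(\omega) = \prod_{i = 1}^r \mathrm{Ann}_{\mathbf{Z}}(a_i). \]
   Context: $\mathrm{Ann}(\omega)$ is the least degree of a finite isogeny $f:X' \to X$ such that $f^*\omega = 0$. For $a \in \mathbf{Z}/n$, $\mathrm{Ann}_{\mathbf{Z}}(a)$ is the positive generator of the annihilator ideal of $a$ in $\mathbf{Z}$. *)

(* Lattice model of a complex torus X = C^g / Lambda,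
   Lambda = Z^(2g) represented as row vectors 'rV[int]_(g+g). *)
From HB Require Import structures.
From mathcomp Require Import all_boot all_order all_algebra all_fingroup.
Set Implicit Arguments. Unset Strict Implicit. Unset Printing Implicit Defensive.
Import GRing.Theory Num.Theory.
Local Open Scope ring_scope.

(* The linear functional on Lambda given by the j-th basis vector of
   H^1(X,Z) = Hom(Lambda,Z); the basis is encoded by the columns of an
   integral matrix E (a basis iff E is unimodular, i.e. E \in unitmx). *)
Definition coh1 (g : nat) (E : 'M[int]_(g + g)) (j : 'I_(g + g))
  (x : 'rV[int]_(g + g)) : int := (x *m E) 0 j.

(* The alternating form omega = sum_{i<r} a_i e_i /\ e_{i+g}, an element of
   H^2(X, Z/n) = Alt^2(Lambda, Z/n), evaluated at (x, y). *)
Definition omega (n g r : nat) (hr : (r <= g)%N) (E : 'M[int]_(g + g))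
  (a : 'I_r -> 'Z_n) (x y : 'rV[int]_(g + g)) : 'Z_n :=
  \sum_(i < r)
    a i * ((coh1 E (lshift g (widen_ord hr i)) x *
            coh1 E (rshift g (widen_ord hr i)) y -
            coh1 E (rshift g (widen_ord hr i)) x *
            coh1 E (lshift g (widen_ord hr i)) y)%:~R).

(* f^* omega = 0 for the isogeny f : C^g/Lambda' -> C^g/Lambda, where
   Lambda' is the sublattice spanned by the rows of M (finite index iff
   det M != 0, and then deg f = |det M|). *)
Definition pullback_zero (n g r : nat) (hr : (r <= g)%N) (E : 'M[int]_(g + g))
  (a : 'I_r -> 'Z_n) (M : 'M[int]_(g + g)) : Prop :=
  forall k l : 'I_(g + g), omega hr E a (row k M) (row l M) = 0.

(* Ann_Z(a) for a in Z/n: positive generator of the annihilator ideal,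
   i.e. the additive order of a. *)
Definition AnnZ (n : nat) (a : 'Z_n) : nat := #[a]%g.

From HB Require Import structures.
From mathcomp Require Import all_boot all_order all_algebra all_fingroup cyclic.
Set Implicit Arguments. Unset Strict Implicit. Unset Printing Implicit Defensive.
Import GRing.Theory Num.Theory.
Local Open Scope ring_scope.

(* In the coordinates given by the basis e, omega is the form
   sum_(i < g) b_i e_i /\ e_(i+g) with b_i = a_i for i < r and b_i = 0 else.
   The sublattice spanned by #[b_i] e_i and e_{i+g} kills it and has index
   prod #[b_i]. Conversely, lift b_i to an integer c_i u_i with
   c_i #[b_i] = n and u_i prime to n. If the rows of N span a sublattice
   killing omega, every entry of the Gram matrix N J N^T, with
   J = [[0, B], [-B, 0]] and B = diag(c_i u_i), is divisible by n, so
   n^(2g) = (prod c_i * prod #[b_i])^2 divides (det N * prod c_i u_i)^2;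
   cancelling prod c_i and the unit part prod u_i leaves
   prod #[b_i] | det N. *)

(* The shift [y] is the product of the primes of [n] not dividing [x]: a prime
   of [n] dividing [x] cannot divide [m * y], and one not dividing [x] divides
   [y], so no prime of [n] divides [x + m * y]. *)
Lemma exists_coprime_shift (x m n : nat) :
  (0 < n)%N -> coprime x m -> exists y, coprime (x + m * y) n.
Proof.
move=> n_gt0 cop_xm; set y := (\prod_(p <- primes n | ~~ (p %| x)) p)%N.
exists y; apply/negPn/negP => ncop.
have gcd_gt1 : (1 < gcdn (x + m * y) n)%N.
  by rewrite ltn_neqAle eq_sym ncop gcdn_gt0 n_gt0 orbT.
set p := pdiv (gcdn (x + m * y) n); have p_pr : prime p := pdiv_prime gcd_gt1.
have p_dvd_sum : (p %| x + m * y)%N := dvdn_trans (pdiv_dvd _) (dvdn_gcdl _ _).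
have p_primes : p \in primes n.
  by rewrite mem_primes p_pr n_gt0 (dvdn_trans (pdiv_dvd _) (dvdn_gcdr _ _)).
have [p_x | p_nx] := boolP (p %| x)%N.
- move: p_dvd_sum; rewrite dvdn_addr // Euclid_dvdM // => /orP[p_m | p_y].
  + have : (p %| gcdn x m)%N by rewrite dvdn_gcd p_x p_m.
    by rewrite (eqP cop_xm) Euclid_dvd1.
  + move: p_y; rewrite Euclid_dvd_prod // big_has_cond => /hasP[q].
    rewrite mem_primes => /and3P[q_pr _ _] /andP[q_nx].
    by rewrite dvdn_prime2 // => /eqP pq; rewrite -pq p_x in q_nx.
- have p_y : (p %| y)%N by rewrite /y (big_rem p) //= p_nx dvdn_mulr.
  by move: p_dvd_sum; rewrite dvdn_addl ?(negbTE p_nx) // dvdn_mull.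
Qed.

Lemma Zp_order (n : nat) (n_gt1 : (1 < n)%N) (b : 'Z_n) :
  #[b]%g = (n %/ gcdn b n)%N.
Proof.
rewrite -{1}(Zp1_expgz b) orderXgcd order_Zp1 gcdnC.
by move: (b : nat); rewrite Zp_cast.
Qed.

Lemma Zp_order_cofactor_unit (n : nat) (n_gt1 : (1 < n)%N) (b : 'Z_n) :
  exists c u : nat, [/\ (c * #[b]%g)%N = n, coprime u n & (c * u)%:R = b].
Proof.
have n_gt0 : (0 < n)%N := ltnW n_gt1.
set c := gcdn b n; set x := (b %/ c)%N; set m := (n %/ c)%N.
have c_gt0 : (0 < c)%N by rewrite gcdn_gt0 n_gt0 orbT.
have cm : (c * m)%N = n by rewrite mulnC divnK // dvdn_gcdr.
have cx : (c * x)%N = b by rewrite mulnC divnK // dvdn_gcdl.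
have cop_xm : coprime x m.
  by rewrite /coprime -(eqn_pmul2l c_gt0) muln_gcdr cx cm muln1.
have [y cop_u] := exists_coprime_shift n_gt0 cop_xm.
exists c, (x + m * y)%N; split=> //; first by rewrite Zp_order.
by rewrite mulnDr cx mulnA cm natrD natrM pchar_Zp // mul0r addr0 natr_Zp.
Qed.

Lemma intr_Zp_eq0 (n : nat) (n_gt1 : (1 < n)%N) (z : int) :
  ((z%:~R : 'Z_n) == 0) = (n%:Z %| z)%Z.
Proof.
by case: z => m; rewrite ?NegzE ?mulrNz ?oppr_eq0 -pmulrn -val_eqE /= val_Zp_nat.
Qed.

Lemma Zp_mulr_order_multiple (n : nat) (b : 'Z_n) (z : int) :
  (#[b]%g %| z)%Z -> b * z%:~R = 0.
Proof.
move=> /dvdzP[q ->]; rewrite intrM mulrCA -pmulrn.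
by rewrite mulr_natr Zp_mulrn -Zp_expg expg_order mulr0.
Qed.

Definition symp_mx (R : pzRingType) (g : nat) (d : 'rV[R]_g) : 'M[R]_(g + g) :=
  block_mx 0 (diag_mx d) (- diag_mx d) 0.

Lemma symp_gramE (R : comPzRingType) (m g : nat) (A : 'M[R]_(m, g + g))
    (d : 'rV[R]_g) (k l : 'I_m) :
  (A *m symp_mx d *m A^T) k l =
  \sum_(i < g) d 0 i * (A k (lshift g i) * A l (rshift g i) -
                        A k (rshift g i) * A l (lshift g i)).
Proof.
rewrite /symp_mx -{1 2}(hsubmxK A) mul_row_block tr_row_mx mul_row_col.
rewrite !mulmx0 add0r addr0 mulmxN mulNmx addrC !mul_mx_diag !mxE -sumrB.
apply: eq_bigr => i _; rewrite !mxE mulrBr !mulrA [d 0 i * _]mulrC.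
by rewrite [A k (rshift g i) * _]mulrC.
Qed.

Lemma absz_det_symp_mx (g : nat) (d : 'rV[int]_g) :
  `|\det (symp_mx d)|%N = (`|(\prod_(i < g) d 0 i)%R| ^ 2)%N.
Proof.
pose S : 'M[int]_(g + g) := block_mx 0 1%:M (-1)%:M 0.
have symp_S : symp_mx d = S *m block_mx (diag_mx d) 0 0 (diag_mx d).
  rewrite mulmx_block !mulmx0 !mul0mx !mul1mx mul_scalar_mx scaleN1r.
  by rewrite !addr0 !add0r.
have SS : S *m S = (-1)%:M.
  rewrite mulmx_block !mulmx0 !mul0mx !mul1mx !mulmx1 !addr0 !add0r.
  by rewrite -scalar_mx_block.
have det_S : `|\det S|%N = 1%N.
  apply/eqP; rewrite -[_ == _]andbb -muln_eq1 -abszM -det_mulmx SS det_scalar.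
  by rewrite abszX exp1n.
by rewrite symp_S det_mulmx det_ublock det_diag !abszM det_S mul1n.
Qed.

Lemma dvdz_det (k : nat) (c : int) (A : 'M[int]_k) :
  (forall i j, (c %| A i j)%Z) -> (c ^+ k %| \det A)%Z.
Proof.
move=> c_dvd; have -> : A = c *: \matrix_(i, j) (A i j %/ c)%Z.
  by apply/matrixP => i j; rewrite !mxE mulrC divzK.
by rewrite detZ dvdz_mulr.
Qed.

Lemma absz_det_mulmx_unitmx (k : nat) (M E : 'M[int]_k) :
  E \in unitmx -> `|\det (M *m E)|%N = `|\det M|%N.
Proof.
by rewrite unitmxE det_mulmx abszM => /orP[] /eqP ->; rewrite muln1.
Qed.

Lemma dvdn_cancel_coprime_sq (C M U d : nat) :
  (0 < C)%N -> coprime M U -> ((C * M) ^ 2 %| (C * U * d) ^ 2)%N -> (M %| d)%N.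
Proof.
by move=> C_gt0 cop_MU; rewrite dvdn_pexp2r // -mulnA dvdn_pmul2l // Gauss_dvdr.
Qed.

Lemma prod_dvdn_det_symp_gram (n g : nat) (c m u : 'I_g -> nat)
    (N : 'M[int]_(g + g)) :
  (0 < n)%N -> (forall i, c i * m i = n)%N -> (forall i, coprime (u i) n) ->
  (forall k l,
     (n%:Z %| (N *m symp_mx (\row_i (c i * u i)%N%:Z) *m N^T) k l)%Z) ->
  (\prod_(i < g) m i %| `|\det N|)%N.
Proof.
move=> n_gt0 cm_n cop_u n_dvd.
set C := (\prod_i c i)%N; set M := (\prod_i m i)%N; set U := (\prod_i u i)%N.
have n_g : (n ^ g = C * M)%N.
  rewrite -big_split /= -{1}(card_ord g) -prod_nat_const.
  by apply: eq_bigr => i _; rewrite cm_n.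
have C_gt0 : (0 < C)%N.
  by rewrite prodn_gt0 // => i; move: n_gt0; rewrite -(cm_n i) muln_gt0 => /andP[].
have cop_UM : coprime M U.
  rewrite coprime_sym; apply: (coprime_dvdr (n := n ^ g)).
    by rewrite n_g dvdn_mull.
  by rewrite coprimeXr // (big_ind (fun x => coprime x n)) ?coprime1n // => x y;
    rewrite coprimeMl => -> ->.
apply: (dvdn_cancel_coprime_sq C_gt0 cop_UM).
have := dvdz_det n_dvd; rewrite -mulmxA !det_mulmx det_tr dvdzE !abszM abszX.
rewrite absz_det_symp_mx.
have -> : (\prod_i (\row_i (c i * u i)%N%:Z) 0 i)%R = (C * U)%N%:Z.
  rewrite -big_split /= (big_morph Posz PoszM (erefl _)).
  by apply: eq_bigr => i _; rewrite mxE.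
by rewrite absz_nat expnD n_g mulnn mulnCA mulnn -expnMn.
Qed.

Definition symp_form (n g : nat) (b : 'I_g -> 'Z_n) (x y : 'rV[int]_(g + g)) :
  'Z_n :=
  \sum_(i < g) b i * (x 0 (lshift g i) * y 0 (rshift g i) -
                      x 0 (rshift g i) * y 0 (lshift g i))%:~R.

Lemma prod_order_dvdn_det (n g : nat) (n_gt1 : (1 < n)%N) (b : 'I_g -> 'Z_n)
    (N : 'M[int]_(g + g)) :
  (forall k l, symp_form b (row k N) (row l N) = 0) ->
  (\prod_(i < g) #[b i]%g %| `|\det N|)%N.
Proof.
move=> symp_N0.
have /fin_all_exists[c /fin_all_exists[u cuP]] :=
  fun i => Zp_order_cofactor_unit n_gt1 (b i).
apply: (prod_dvdn_det_symp_gram (c := c) (u := u) (ltnW n_gt1)).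
- by move=> i; have [] := cuP i.
- by move=> i; have [] := cuP i.
move=> k l; rewrite -(intr_Zp_eq0 n_gt1) symp_gramE rmorph_sum /=.
apply/eqP; rewrite -[RHS](symp_N0 k l); apply: eq_bigr => i _.
have [_ _ <-] := cuP i; rewrite !mxE intrM.
by rewrite rmorphB /= !rmorphM /=.
Qed.

Definition order_diag_mx (n g : nat) (b : 'I_g -> 'Z_n) : 'M[int]_(g + g) :=
  diag_mx (row_mx (\row_i (#[b i]%g)%:Z) (const_mx 1)).

Lemma det_order_diag_mx (n g : nat) (b : 'I_g -> 'Z_n) :
  \det (order_diag_mx b) = (\prod_(i < g) #[b i]%g)%N%:Z.
Proof.
rewrite det_diag big_split_ord /= [X in _ * X]big1 => [|i _]; last first.
  by rewrite row_mxEr mxE.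
rewrite mulr1 (big_morph Posz PoszM (erefl _)).
by apply: eq_bigr => i _; rewrite row_mxEl mxE.
Qed.

Lemma symp_form_order_diag_mx (n g : nat) (b : 'I_g -> 'Z_n) k l :
  symp_form b (row k (order_diag_mx b)) (row l (order_diag_mx b)) = 0.
Proof.
apply: big1 => i _; apply: Zp_mulr_order_multiple.
have order_dvd k' : (#[b i]%g %| order_diag_mx b k' (lshift g i))%Z.
  rewrite [order_diag_mx _ _ _]mxE; case: eqP => [->|_].
    by rewrite row_mxEl mxE mulr1n dvdzz.
  by rewrite mulr0n dvdz0.
rewrite ![row _ _ _ _]mxE.
by apply: rpredB; [apply: dvdz_mulr | apply: dvdz_mull].
Qed.

Definition pad_coef (n r g : nat) (a : 'I_r -> 'Z_n) (i : 'I_g) : 'Z_n :=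
  if insub (val i) is Some j then a j else 0.

Lemma pad_coef_widen (n r g : nat) (hr : (r <= g)%N) (a : 'I_r -> 'Z_n) i :
  pad_coef a (widen_ord hr i) = a i.
Proof. by rewrite /pad_coef /= valK. Qed.

Lemma pad_coef_out (n r g : nat) (a : 'I_r -> 'Z_n) (i : 'I_g) :
  (r <= i)%N -> pad_coef a i = 0.
Proof. by move=> r_le_i; rewrite /pad_coef insubN // -leqNgt. Qed.

Lemma omega_symp_form (n g r : nat) (hr : (r <= g)%N) (E : 'M[int]_(g + g))
    (a : 'I_r -> 'Z_n) (x y : 'rV[int]_(g + g)) :
  omega hr E a x y = symp_form (pad_coef a) (x *m E) (y *m E).
Proof.
rewrite /symp_form (bigID (fun i : 'I_g => (i < r)%N)) /= [X in _ + X]big1 => [|i].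
  by rewrite addr0 big_ord_narrow; apply: eq_bigr => i _; rewrite pad_coef_widen.
by rewrite -leqNgt => /pad_coef_out ->; rewrite mul0r.
Qed.

Lemma prod_order_pad_coef (n r g : nat) (hr : (r <= g)%N) (a : 'I_r -> 'Z_n) :
  (\prod_(i < g) #[pad_coef a i]%g = \prod_(i < r) #[a i]%g)%N.
Proof.
rewrite (bigID (fun i : 'I_g => (i < r)%N)) /= [X in (_ * X)%N]big1 => [|i].
  by rewrite muln1 big_ord_narrow; apply: eq_bigr => i _; rewrite pad_coef_widen.
by rewrite -leqNgt => /pad_coef_out ->; apply: order1.
Qed.

Theorem lemma3p3 (n g r : nat) (hn : (1 < n)%N) (hr : (r <= g)%N)
  (E : 'M[int]_(g + g)) (hE : E \in unitmx)
  (a : 'I_r -> 'Z_n) (ha : forall i, a i != 0) :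
  (exists M : 'M[int]_(g + g),
      \det M != 0 /\ pullback_zero hr E a M /\
      `|\det M|%N = (\prod_(i < r) AnnZ (a i))%N) /\
  (forall M : 'M[int]_(g + g),
      \det M != 0 -> pullback_zero hr E a M ->
      (\prod_(i < r) AnnZ (a i) <= `|\det M|)%N).
Proof.
rewrite /pullback_zero /AnnZ -(prod_order_pad_coef hr); split.
  pose D := order_diag_mx (pad_coef (g := g) a); exists (D *m invmx E).
  have DE : D *m invmx E *m E = D by rewrite mulmxKV.
  have det_M : `|\det (D *m invmx E)|%N = (\prod_(i < g) #[pad_coef a i]%g)%N.
    by rewrite -(absz_det_mulmx_unitmx _ hE) DE det_order_diag_mx absz_nat.
  split; first by rewrite -absz_eq0 det_M -lt0n prodn_gt0.
  split=> // k l; rewrite omega_symp_form -!row_mul DE.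
  exact: symp_form_order_diag_mx.
move=> M det_M0 omega_M0; apply: dvdn_leq; first by rewrite absz_gt0.
rewrite -(absz_det_mulmx_unitmx M hE); apply: prod_order_dvdn_det => // k l.
by rewrite !row_mul -omega_symp_form.
Qed.
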